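(* Let $s\ge1$ and $0\le k\le s$. Then (1) $O(s,k)=\binom{2s-k-1}{k}(C_{s-k})^2$, and (2) $O(s,k)=\sum_{m=k}^{s}\binom{m}{k}E(s,m)$.
   Context: A $p$-string of length $s$ is a correctly matched string of $s$ pairs of parentheses; there are $C_s=\frac{1}{s+1}\binom{2s}{s}$ of them ($C_0=1$). Given $p$-strings $U$ (upper), $W$ (lower) of length $s$, the meander graph $\Gamma^1_{2s-1}$ is obtained by marking points $0,1,\dots,2s$ on the $x$-axis, taking the segment $[0,2s]$, joining points $a,b$ by an upper semicircle for each matched pair of $U$ at positions $a<b$ (positions $1,\dots,2s$), and points $a-1,b-1$ by a lower semicircle for each matched pair of $W$ at positions $a<b$; the vertices are $1,\dots,2s-1$. A pierced circle at position $i$ ($1\le i\le 2s-2$) is present if vertices $i,i+1$ are joined both by an upper and a lower semicircle. $E(s,k)$ is the number of pairs $(U,W)$ whose meander graph has exactly $k$ pierced circles. For the path graph $P_v$ with vertices $1,\dots,v$, $\mathcal{A}_v(k)$ denotes the set of ways to place $k$ pierced circles at positions in $\{1,\dots,v-1\}$ with no two sharing a vertex (positions pairwise differing by at least $2$). $O(s,k)$ is the number of triples $(A,P,Q)$ with $A\in\mathcal{A}_{2s-1}(k)$ and $P,Q$ $p$-strings of length $s-k$. *)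

From mathcomp Require Import all_boot.
Set Implicit Arguments. Unset Strict Implicit. Unset Printing Implicit Defensive.

(* A word of parentheses is a seq bool: true = '(' , false = ')'. *)

Definition balanced (w : seq bool) : bool :=
  all (fun i => count negb (take i w) <= count id (take i w)) (iota 0 (size w).+1)
  && (count id w == count negb w).

(* Character at position a (positions are numbered 1..size w). *)
Definition chr (w : seq bool) (a : nat) : bool := nth false w a.-1.

Definition matched (w : seq bool) (a b : nat) : bool :=
  [&& 1 <= a, a < b, b <= size w, chr w a, ~~ chr w b &
      balanced (take (b - a - 1) (drop a w))].

Definition pstr (s : nat) : {set (s.*2).-tuple bool} :=
  [set t : (s.*2).-tuple bool | balanced t].

(* Number of pierced circles of the meander graph of (U, W), U, W p-strings
   of length s: positions i, 1 <= i <= 2s-2, such that vertices i, i+1 are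
   joined by an upper semicircle (U matches positions i, i+1) and by a lower
   semicircle (W matches positions i+1, i+2, drawn between points i, i+1). *)
Definition pierced (s : nat) (U W : seq bool) : nat :=
  count (fun i => matched U i i.+1 && matched W i.+1 i.+2)
        (iota 1 (s.*2 - 2)).

Definition E (s k : nat) : nat :=
  #|[set p : (s.*2).-tuple bool * (s.*2).-tuple bool |
      [&& p.1 \in pstr s, p.2 \in pstr s & pierced s p.1 p.2 == k]]|.

Definition Aset (v k : nat) : {set {set 'I_v}} :=
  [set A : {set 'I_v} |
     [&& [forall i in A, 1 <= (i : nat)],
         [forall i in A, forall j in A, ((i : nat) < j) ==> (i.+2 <= j)] &
         #|A| == k]].

Definition O (s k : nat) : nat :=
  #|[set x : {set 'I_(s.*2 - 1)} * ((s - k).*2.-tuple bool * (s - k).*2.-tuple bool) |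
      [&& x.1 \in Aset (s.*2 - 1) k, x.2.1 \in pstr (s - k) & x.2.2 \in pstr (s - k)]]|.

Definition catalan (n : nat) : nat := 'C(n.*2, n) %/ n.+1.

(* Part (1) is a product count. A_v(k) is in bijection with the words of length v
   whose k ones are pairwise non-adjacent and avoid the first letter, hence has C(v-k, k)
   elements; balanced words of length 2n are counted by the ballot number
   C(2n, n) - C(2n, n-1) = C_n.
   Part (2) counts in two ways the pairs (S, (U, W)) where U, W are p-strings of
   length s and S is a k-set of pierced circles of their meander graph. Grouping by
   (U, W) gives sum_m C(m, k) E(s, m). Grouping by S: pierced circles share no vertex,
   so S is in A_{2s-1}(k), and the p-strings U with "()" at every i in S (resp. W at
   every i+1) arise, by reinserting these |S| pairs, from arbitrary p-strings of
   length s-k; so each S contributes C_{s-k}^2, and the total is O(s,k). *)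

From mathcomp Require Import all_boot zify.
Set Implicit Arguments. Unset Strict Implicit. Unset Printing Implicit Defensive.

Fixpoint bitseqs (n : nat) : seq bitseq :=
  if n is n'.+1 then [seq true :: w | w <- bitseqs n'] ++ [seq false :: w | w <- bitseqs n']
  else [:: [::]].

Lemma mem_bitseqs n w : (w \in bitseqs n) = (size w == n).
Proof.
elim: n w => [|n IHn] [|b w] //=; rewrite mem_cat; first by apply/negP => /orP[] /mapP[].
have consK c : injective (@cons bool c) by move=> ? ? [].
by case: b; rewrite (mem_map (consK _)) IHn; case: mapP => [[? _ []]|_]; rewrite ?orbF.
Qed.

Lemma uniq_bitseqs n : uniq (bitseqs n).
Proof.
elim: n => //= n IHn; rewrite cat_uniq !map_inj_uniq ?IHn //=; try by move=> ? ? [].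
by rewrite andbT; apply/hasPn => _ /mapP[w _ ->]; apply/mapP => -[].
Qed.

Lemma count_bitseqsS n (P : pred bitseq) :
  count P (bitseqs n.+1) =
  count (fun w => P (true :: w)) (bitseqs n) + count (fun w => P (false :: w)) (bitseqs n).
Proof. by rewrite /= count_cat !count_map. Qed.

Lemma card_tuple_bool n (P : pred bitseq) :
  #|[set t : n.-tuple bool | P t]| = count P (bitseqs n).
Proof.
rewrite cardsE cardE /enum_mem size_filter -enumT -(count_map val P).
apply/permP/uniq_perm => [||w]; rewrite ?(map_inj_uniq val_inj) ?enum_uniq ?uniq_bitseqs //.
rewrite mem_bitseqs; apply/mapP/eqP => [[t _ ->]|hw]; first exact: size_tuple.
by exists (Tuple (introT eqP hw)); rewrite ?mem_enum.
Qed.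

Fixpoint nonneg_walk (h : nat) (w : bitseq) : bool :=
  if w is b :: w' then
    if b then nonneg_walk h.+1 w' else (0 < h) && nonneg_walk h.-1 w'
  else true.

Lemma nonneg_walkE h w :
  all (fun i => count negb (take i w) <= h + count id (take i w)) (iota 0 (size w).+1)
  = nonneg_walk h w.
Proof.
elim: w h => [|b w IHw] h //.
have -> : iota 0 (size (b :: w)).+1 = 0 :: map (addn 1) (iota 0 (size w).+1).
  by rewrite -iotaDl.
case: b h => [|] [|h]; last 2 first; first by case: w {IHw}.
all: rewrite [nonneg_walk _ _]/= -IHw; move: (iota 0 _) => I;
  rewrite [all _ (_ :: _)]/= all_map;
  by apply: eq_all => i; rewrite /= add1n /= !add0n; apply/idP/idP; lia.
Qed.

Lemma balancedE w : balanced w = nonneg_walk 0 w && (count id w == count negb w).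
Proof. by rewrite /balanced -nonneg_walkE. Qed.

(* The inserted pair occupies the 1-based positions [t.+1] and [t.+2]. *)
Definition insert_pair (t : nat) (w : bitseq) := take t w ++ [:: true, false & drop t w].

Lemma size_insert_pair t w : size (insert_pair t w) = (size w).+2.
Proof. by rewrite size_cat /= addnS addnS -size_cat cat_take_drop. Qed.

Lemma count_insert_pair t w (P : pred bool) :
  count P (insert_pair t w) = P true + P false + count P w.
Proof. by rewrite -{2}(cat_take_drop t w) !count_cat /=; lia. Qed.

Lemma nonneg_walk_insert_pair t h w : nonneg_walk h (insert_pair t w) = nonneg_walk h w.
Proof.
rewrite /insert_pair; elim: t w h => [|t IHt] [|b w] h //=.
by case: b; rewrite IHt.
Qed.

Lemma balanced_insert_pair t w : balanced (insert_pair t w) = balanced w.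
Proof. by rewrite !balancedE nonneg_walk_insert_pair !count_insert_pair. Qed.

Definition ballot (m h u : nat) :=
  count (fun w => nonneg_walk h w && (count id w == u)) (bitseqs m).

Lemma ballotS m h u :
  ballot m.+1 h u = (if u is u'.+1 then ballot m h.+1 u' else 0)
                    + (if h is h'.+1 then ballot m h' u else 0).
Proof.
rewrite /ballot count_bitseqsS; congr (_ + _).
  case: u => [|u]; last exact: eq_count.
  by rewrite (@eq_count _ _ pred0) ?count_pred0 // => w /=; rewrite andbF.
by case: h => [|h]; [rewrite (@eq_count _ _ pred0) ?count_pred0 | apply: eq_count].
Qed.

Lemma ballotE u h :
  ballot (u.*2 + h) h u + (if u is u'.+1 then 'C(u.*2 + h, u') else 0) = 'C(u.*2 + h, u).
Proof.
elim: u h => [|u IHu] h.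
  by elim: h => [|h IHh] //; rewrite -addSnnS ballotS !bin0 addn0 in IHh *.
have pascal n : 'C(n.+1, u) = 'C(n, u) + (if u is u'.+1 then 'C(n, u') else 0).
  by case: u {IHu} => [|u]; rewrite ?bin0 ?addn0.
elim: h => [|h IHh].
  have sym : 'C((u.*2).+1, u.+1) = 'C((u.*2).+1, u).
    by rewrite -bin_sub; [congr 'C(_, _) |]; lia.
  have := IHu 1; rewrite addn0 doubleS ballotS addn0 binS !addn1 sym (pascal (u.*2).+1); lia.
have := IHu h.+2; rewrite (_ : (u.+1).*2 + h = u.*2 + h.+2) in IHh; last lia.
rewrite (_ : (u.+1).*2 + h.+1 = (u.*2 + h.+2).+1); last lia.
rewrite ballotS /= binS (pascal (u.*2 + h.+2)); lia.
Qed.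

Lemma count_balanced n : count balanced (bitseqs n.*2) = catalan n.
Proof.
have -> : count balanced (bitseqs n.*2) = ballot n.*2 0 n.
  apply: eq_in_count => w; rewrite mem_bitseqs => /eqP sw.
  rewrite balancedE; congr (_ && _); have := count_predC id w.
  by rewrite sw (@eq_count _ (predC id) negb) //; move/eqP; lia.
have := ballotE n 0; rewrite addn0 /catalan; case: n => [|n] //= ballotE.
have := mul_bin_left (n.+1).*2 n; rewrite (_ : (n.+1).*2 - n = n.+2); last by lia.
by move=> binE; rewrite (_ : 'C(_, _) = n.+2 * ballot (n.+1).*2 0 n.+1) ?mulKn //; nia.
Qed.

Lemma card_pstr n : #|pstr n| = catalan n.
Proof. by rewrite card_tuple_bool count_balanced. Qed.

Fixpoint no_adjacent (w : bitseq) : bool :=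
  if w is b :: w' then ~~ (b && head false w') && no_adjacent w' else true.

Lemma no_adjacentP w :
  reflect (forall i, ~~ (nth false w i && nth false w i.+1)) (no_adjacent w).
Proof.
elim: w => [|b w IHw] /=; first by constructor => i; rewrite nth_nil.
apply: (iffP andP) => [[hb /IHw hw] [|i] //|h]; first exact: hw.
by split; [have := h 0; case: w {IHw h} | apply/IHw => i; apply: h i.+1].
Qed.

Definition count_no_adjacent n k :=
  count (fun w => no_adjacent w && (count id w == k)) (bitseqs n).

Lemma count_no_adjacentSS n k :
  count_no_adjacent n.+2 k.+1 = count_no_adjacent n k + count_no_adjacent n.+1 k.+1.
Proof.
rewrite /count_no_adjacent count_bitseqsS; congr (_ + _).
by rewrite count_bitseqsS (@eq_count _ _ pred0) ?count_pred0.
Qed.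

Lemma count_no_adjacent0 n : count_no_adjacent n 0 = 1.
Proof.
elim: n => // n; rewrite /count_no_adjacent count_bitseqsS => <-.
by rewrite (@eq_count _ _ pred0) ?count_pred0 // => w /=; rewrite andbF.
Qed.

Lemma count_no_adjacentE n k : count_no_adjacent n k = 'C(n.+1 - k, k).
Proof.
suff: count_no_adjacent n k = 'C(n.+1 - k, k) /\ count_no_adjacent n.+1 k = 'C(n.+2 - k, k)
  by case.
elim: n k => [|n IHn] k; first by split; case: k => [|[|k]].
split; first exact: (IHn k).2.
case: k => [|k]; first by rewrite count_no_adjacent0 bin0.
rewrite count_no_adjacentSS (IHn k).1 (IHn k.+1).2 !subSS.
have [le_k_n1 | lt_n1_k] := leqP k n.+1; last by rewrite !bin_small //; lia.
by rewrite (subSn le_k_n1) binS addnC.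
Qed.

Section IndicatorTuple.
Variable n : nat.
Implicit Types (A : {set 'I_n}) (i j : 'I_n).

Definition indicator_tuple A : n.-tuple bool := [tuple i \in A | i < n].

Lemma indicator_tuple_bij : bijective indicator_tuple.
Proof.
exists (fun t => [set i | tnth t i]) => [A | t].
  by apply/setP => i; rewrite inE tnth_mktuple.
by apply: eq_from_tnth => i; rewrite tnth_mktuple inE.
Qed.

Lemma nth_indicator_tuple A i : nth false (indicator_tuple A) i = (i \in A).
Proof. by rewrite -tnth_nth tnth_mktuple. Qed.

Lemma nth_indicator_tuple_default A m : n <= m -> nth false (indicator_tuple A) m = false.
Proof. by move=> le_n_m; rewrite nth_default ?size_tuple. Qed.

Lemma count_indicator_tuple A : count id (indicator_tuple A) = #|A|.
Proof. by rewrite cardE /enum_mem size_filter -enumT /= count_map. Qed.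

Lemma indicator_tuple_head A :
  [forall i in A, 1 <= i] = ~~ head false (indicator_tuple A).
Proof.
rewrite -nth0; apply/forall_inP/idP => [pos_A | ].
  have [n0 | n_gt0] := posnP n; first by rewrite nth_indicator_tuple_default ?n0.
  by rewrite (nth_indicator_tuple A (Ordinal n_gt0)); apply/negP => /pos_A.
by move=> notA0 i Ai; rewrite lt0n; apply: contraNneq notA0 => <-; rewrite nth_indicator_tuple.
Qed.

Lemma indicator_tuple_no_adjacent A :
  [forall i in A, forall j in A, (i < j) ==> (i.+2 <= j)] = no_adjacent (indicator_tuple A).
Proof.
apply/forall_inP/no_adjacentP => [spread m | no_adj i Ai].
  have [lt_m1_n | ] := ltnP m.+1 n; last by move/nth_indicator_tuple_default ->; rewrite andbF.
  rewrite (nth_indicator_tuple A (Ordinal (ltnW lt_m1_n))).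
  rewrite (nth_indicator_tuple A (Ordinal lt_m1_n)).
  by apply/negP => /andP[/spread/forall_inP spread_m /spread_m]; rewrite /= ltnSn ltnn.
apply/forall_inP => j Aj; apply/implyP => lt_ij; rewrite ltn_neqAle lt_ij andbT.
apply: contra (no_adj i) => /eqP ej; rewrite (nth_indicator_tuple A i) ej.
by rewrite (nth_indicator_tuple A j) Ai Aj.
Qed.
End IndicatorTuple.

Lemma card_Aset n k : #|Aset n k| = 'C(n - k, k).
Proof.
pose P (t : bitseq) := [&& ~~ head false t, no_adjacent t & count id t == k].
have -> : Aset n k = @indicator_tuple n @^-1: [set t : n.-tuple bool | P t].
  apply/setP => A; rewrite !inE /P.
  by rewrite indicator_tuple_head indicator_tuple_no_adjacent count_indicator_tuple.
rewrite on_card_preimset; last exact/onW_bij/indicator_tuple_bij.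
rewrite card_tuple_bool.
case: n => [|n]; rewrite {}/P; first by case: k.
rewrite count_bitseqsS (@eq_count _ _ pred0) ?count_pred0 // -count_no_adjacentE.
exact: eq_count.
Qed.

Definition pair_at (w : bitseq) (i : nat) := chr w i && ~~ chr w i.+1.

Lemma matched_adjacent w i : matched w i i.+1 = [&& 0 < i, i < size w & pair_at w i].
Proof. by rewrite /matched subSnn subnn take0 ltnSn andbT; case: (0 < i). Qed.

Lemma pair_at_succ w i : pair_at w i -> ~~ pair_at w i.+1.
Proof. by case/andP => _ /negbTE; rewrite /pair_at /chr /= => ->. Qed.

Definition delete_pair (t : nat) (w : bitseq) := take t w ++ drop t.+2 w.

Lemma size_delete_pair t w : t.+2 <= size w -> size (delete_pair t w) = size w - 2.
Proof. by move=> le_t2_w; rewrite size_cat size_take size_drop; case: ltnP; lia. Qed.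

Lemma insert_pairK t w : t <= size w -> delete_pair t (insert_pair t w) = w.
Proof.
move=> le_t_w; have size_take_t : size (take t w) = t by rewrite size_takel.
rewrite /delete_pair /insert_pair take_size_cat // drop_cat size_take_t ifN; last lia.
rewrite (_ : t.+2 - t = 2); last lia.
by rewrite /= drop0 cat_take_drop.
Qed.

Lemma delete_pairK t w :
  t.+2 <= size w -> pair_at w t.+1 -> insert_pair t (delete_pair t w) = w.
Proof.
move=> le_t2_w /andP[wt wt1]; have size_take_t : size (take t w) = t by rewrite size_takel; lia.
rewrite /delete_pair /insert_pair take_size_cat // drop_cat size_take_t ltnn subnn drop0.
rewrite -{3}(cat_take_drop t w) (drop_nth false (_ : t < size w)); last by lia.
by rewrite (drop_nth false (_ : t.+1 < size w)) //; move: wt wt1; rewrite /chr /= => -> /negbTE ->.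
Qed.

Lemma pair_at_insert_pair t w : t <= size w -> pair_at (insert_pair t w) t.+1.
Proof.
move=> le_t_w; rewrite /pair_at /chr /insert_pair /= !nth_cat size_takel //.
by rewrite ltnn subnn ltnNge leqnSn subSnn.
Qed.

Lemma pair_at_insert_pair_lt t w i :
  t <= size w -> i < t -> pair_at (insert_pair t w) i = pair_at w i.
Proof.
move=> le_t_w lt_i_t; rewrite /pair_at /chr /insert_pair !nth_cat size_takel //.
by rewrite !nth_take ?(leq_ltn_trans (leq_pred i)) ?lt_i_t.
Qed.

Lemma count_pair_at_insert_pair m t (P : pred bitseq) : t <= m ->
  count (fun w => pair_at w t.+1 && P w) (bitseqs m.+2) =
  count (fun w => P (insert_pair t w)) (bitseqs m).
Proof.
move=> le_t_m; rewrite -(count_map (insert_pair t) P).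
transitivity (count P [seq w <- bitseqs m.+2 | pair_at w t.+1]).
  by rewrite count_filter; apply: eq_count => w; rewrite /= andbC.
apply/permP/uniq_perm => [||w]; first by rewrite filter_uniq ?uniq_bitseqs.
  rewrite map_inj_in_uniq ?uniq_bitseqs // => x y.
  rewrite !mem_bitseqs => /eqP sx /eqP sy eq_ins.
  by rewrite -(insert_pairK (t := t) (w := x)) ?sx // eq_ins insert_pairK ?sy.
rewrite mem_filter mem_bitseqs; apply/andP/mapP => [[pw /eqP sw] | [x]].
  exists (delete_pair t w); last by rewrite delete_pairK ?sw.
  by rewrite mem_bitseqs size_delete_pair sw ?subn2 // !ltnS.
rewrite mem_bitseqs => /eqP sx ->.
by rewrite pair_at_insert_pair ?size_insert_pair ?sx.
Qed.

(* [T] is decreasing, so reinserting the pair at its largest position leaves the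
   other positions in place. *)
Lemma count_balanced_pair_at s T :
  sorted (fun i j => j.+2 <= i) T -> all (fun i => 0 < i < s.*2) T ->
  count (fun w => balanced w && all (pair_at w) T) (bitseqs s.*2) = catalan (s - size T).
Proof.
elim: T s => [|t T IHT] s sorted_T range_T.
  by rewrite subn0 -count_balanced; apply: eq_count => w; rewrite andbT.
case/andP: range_T => /andP[t_gt0 t_lt] range_T.
case: s t_lt range_T => [|s] t_lt range_T; first by [].
case: t t_gt0 t_lt sorted_T => [//|t] _ t_lt sorted_T.
have below_t : all (fun i => i.+2 <= t.+1) T.
  by apply: order_path_min sorted_T => a b c; lia.
rewrite doubleS (@eq_count _ _ (fun w => pair_at w t.+1 && (balanced w && all (pair_at w) T))).
  rewrite count_pair_at_insert_pair; last lia.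
  rewrite subSS -IHT; first last.
  - by apply/allP => i iT; have := allP range_T i iT; have := allP below_t i iT; lia.
  - exact: path_sorted sorted_T.
  apply: eq_in_count => w; rewrite mem_bitseqs => /eqP sw.
  rewrite balanced_insert_pair; congr (_ && _); apply: eq_in_all => i iT.
  by apply: pair_at_insert_pair_lt; have := allP below_t i iT; lia.
by move=> w; rewrite /= andbCA.
Qed.

Section Positions.
Variable n : nat.
Implicit Type S : {set 'I_n}.

Definition positions S : seq nat := rev [seq val i | i <- enum S].

Lemma size_positions S : size (positions S) = #|S|.
Proof. by rewrite size_rev size_map cardE. Qed.

Lemma all_positions S (P : pred nat) : all P (positions S) = [forall i in S, P i].
Proof.
rewrite all_rev all_map; apply/allP/forall_inP => [P_S i Si | P_S i].
  by apply: P_S; rewrite mem_enum.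
by rewrite mem_enum => /P_S.
Qed.

Lemma sorted_positions S :
  [forall i in S, forall j in S, (i < j) ==> (i.+2 <= j)] ->
  sorted (fun i j => j.+2 <= i) (positions S).
Proof.
move=> /forall_inP spread; rewrite rev_sorted.
have sorted_S : sorted ltn [seq val i | i <- enum S].
  rewrite -[enum S](eq_filter (mem_enum _)) -(eq_filter (mem_map val_inj _)) -filter_map.
  by rewrite (sorted_filter ltn_trans) // -enumT val_enum_ord iota_ltn_sorted.
apply: (sub_in_sorted (P := [in [seq val i | i <- enum S]]) (e := ltn)) sorted_S; last first.
  exact/allP.
move=> _ _ /mapP[i + ->] /mapP[j + ->]; rewrite !mem_enum => Si Sj.
by move/spread: Si => /forall_inP/(_ j Sj)/implyP.
Qed.

Lemma card_balanced_pair_at s S d :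
  [forall i in S, forall j in S, (i < j) ==> (i.+2 <= j)] ->
  [forall i in S, 0 < i + d < s.*2] ->
  #|[set w : (s.*2).-tuple bool | balanced w && [forall i in S, pair_at w (i + d)]]|
  = catalan (s - #|S|).
Proof.
move=> spread range_S.
rewrite (card_tuple_bool _ (fun w => balanced w && [forall i in S, pair_at w (i + d)])).
rewrite -size_positions -(size_map (addn^~ d)).
rewrite -count_balanced_pair_at ?sorted_map ?all_map ?all_positions //.
  by apply: eq_count => w; rewrite all_map all_positions.
by apply: sub_sorted (sorted_positions spread) => i j /=; lia.
Qed.
End Positions.

Section Pierced.
Variable s : nat.
Hypothesis s_gt0 : 0 < s.
Local Notation word := ((s.*2).-tuple bool).
Local Notation vertex := 'I_(s.*2 - 1).

Definition pierced_set (U W : bitseq) : {set vertex} :=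
  [set i : vertex | [&& 0 < i, pair_at U i & pair_at W i.+1]].

Lemma card_pierced_set (U W : word) : #|pierced_set U W| = pierced s U W.
Proof.
transitivity (count (fun i => [&& 0 < i, pair_at U i & pair_at W i.+1]) (iota 0 (s.*2 - 1))).
  by rewrite cardsE cardE /enum_mem size_filter -enumT -val_enum_ord count_map.
rewrite (_ : s.*2 - 1 = (s.*2 - 2).+1); last lia.
rewrite /pierced [count _ (iota 0 _)]/= add0n; apply: eq_in_count => i.
rewrite mem_iota => /andP[i_gt0 i_lt].
have [lt_i lt_i1] : i < s.*2 /\ i.+1 < s.*2 by lia.
by rewrite !matched_adjacent !size_tuple i_gt0 lt_i lt_i1.
Qed.

Lemma subset_pierced_set_Aset (U W : bitseq) (S : {set vertex}) :
  S \subset pierced_set U W -> S \in Aset (s.*2 - 1) #|S|.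
Proof.
move=> /subsetP sub; rewrite inE eqxx andbT; apply/andP; split.
  by apply/forall_inP => i /sub; rewrite inE => /and3P[].
apply/forall_inP => i /sub Pi; apply/forall_inP => j /sub Pj; apply/implyP => lt_ij.
rewrite ltn_neqAle lt_ij andbT; apply: contraTneq Pj => ij; rewrite inE -ij.
by move: Pi; rewrite inE => /and3P[_ /pair_at_succ /negbTE -> _]; rewrite andbF.
Qed.

Lemma pierced_le (U W : word) : pierced s U W <= s.
Proof.
(* The pierced set lies in [Aset (s.*2 - 1) (pierced s U W)], which is empty unless
   [pierced s U W < s]. *)
have : 0 < #|Aset (s.*2 - 1) #|pierced_set U W| |.
  by apply/card_gt0P; exists (pierced_set U W); apply: subset_pierced_set_Aset.
by rewrite card_Aset bin_gt0 card_pierced_set; lia.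
Qed.

Lemma card_pierced_supsets (S : {set vertex}) :
  #|[set p : word * word | [&& p.1 \in pstr s, p.2 \in pstr s & S \subset pierced_set p.1 p.2]]|
  = (S \in Aset (s.*2 - 1) #|S|) * catalan (s - #|S|) ^ 2.
Proof.
have [AS | notAS] := boolP (S \in Aset _ _); last first.
  apply: eq_card0 => p; rewrite !inE.
  by apply: contraNF notAS => /and3P[_ _ /subset_pierced_set_Aset].
move: (AS); rewrite inE => /and3P[/forall_inP S_gt0 spread _].
pose words d := [set w : word | balanced w && [forall i in S, pair_at w (i + d)]].
have -> : [set p : word * word |
            [&& p.1 \in pstr s, p.2 \in pstr s & S \subset pierced_set p.1 p.2]]
          = setX (words 0) (words 1).
  apply/setP => -[U W]; rewrite !inE.
  have -> : S \subset pierced_set U W =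
            [forall i in S, pair_at U (i + 0)] && [forall i in S, pair_at W (i + 1)].
    apply/subsetP/andP => [sub | [/forall_inP SU /forall_inP SW] i Si].
      by split; apply/forall_inP => i /sub; rewrite inE ?addn0 ?addn1 => /and3P[].
    by move: (SU i Si) (SW i Si); rewrite addn0 addn1 /pierced_set inE S_gt0 //= => -> ->.
  by case: (balanced U); case: (balanced W); rewrite /= ?andbF.
rewrite cardsX !card_balanced_pair_at ?mul1n //.
all: by apply/forall_inP => i Si; have := S_gt0 i Si; have := ltn_ord i; lia.
Qed.
End Pierced.

Lemma O_Aset s k : O s k = #|Aset (s.*2 - 1) k| * catalan (s - k) ^ 2.
Proof.
by rewrite /O -card_pstr -mulnn -!cardsX; apply: eq_card => -[A [P Q]]; rewrite !inE.
Qed.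

Section DoubleCounting.
Variables s k : nat.
Hypothesis s_gt0 : 0 < s.
Local Notation word := ((s.*2).-tuple bool).

Lemma sum_binomial_E :
  \sum_(k <= m < s.+1) 'C(m, k) * E s m =
  \sum_(p : word * word | (p.1 \in pstr s) && (p.2 \in pstr s)) 'C(pierced s p.1 p.2, k).
Proof.
under eq_bigr => m _ do rewrite /E -sum1dep_card big_distrr /= muln1.
rewrite (exchange_big_dep (fun p : word * word => (p.1 \in pstr s) && (p.2 \in pstr s))) /=.
  apply: eq_bigr => p Dp; rewrite (eq_bigl (fun m => m == pierced s p.1 p.2)).
    by rewrite big_nat1_eq ltnS pierced_le // andbT; case: leqP => // /bin_small ->.
  by move=> m; rewrite andbA Dp eq_sym.
by move=> m p _ /and3P[-> ->].
Qed.

Lemma sum_binomial_pierced :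
  \sum_(p : word * word | (p.1 \in pstr s) && (p.2 \in pstr s)) 'C(pierced s p.1 p.2, k) =
  #|Aset (s.*2 - 1) k| * catalan (s - k) ^ 2.
Proof.
under eq_bigr => p _ do rewrite -card_pierced_set // -cards_draws -sum1dep_card.
rewrite (exchange_big_dep (fun S : {set 'I_(s.*2 - 1)} => #|S| == k)) /=; last first.
  by move=> p S _ /andP[].
under eq_bigr => S /eqP cardS.
  rewrite sum1dep_card (_ : [set p | _] = [set p : word * word |
    [&& p.1 \in pstr s, p.2 \in pstr s & S \subset pierced_set s p.1 p.2]]); last first.
    by apply/setP => p; rewrite !inE cardS eqxx andbT andbA.
  rewrite card_pierced_supsets // cardS.
  over.
rewrite -big_distrl /= -sum1_card; congr (_ * _).
rewrite big_mkcond [RHS]big_mkcond; apply: eq_bigr => S _.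
by rewrite inE; case: (#|S| == k); rewrite ?andbF.
Qed.
End DoubleCounting.

Theorem lemma3p3 (s k : nat) (hs : 1 <= s) (hk : k <= s) :
  O s k = 'C(s.*2 - k - 1, k) * (catalan (s - k)) ^ 2
  /\ O s k = \sum_(k <= m < s.+1) 'C(m, k) * E s m.
Proof.
split; first by rewrite O_Aset card_Aset subnAC.
by rewrite O_Aset sum_binomial_E // sum_binomial_pierced.
Qed.
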